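(* Let $X$ be a topological space and $Y$ be a metrizable space. Then $$\mathrm{B}_1(X,Y)\subseteq \Sigma^{f*}_0(X,Y)=\mathrm{K}_1(X,Y)\cap\Sigma^f(X,Y).$$
   Context: A subset of $X$ is functionally closed (functionally open) if it is of the form $\varphi^{-1}(0)$ (resp. $X\setminus\varphi^{-1}(0)$) for some continuous $\varphi:X\to[0,1]$. A functionally $F_\sigma$-set is a countable union of functionally closed sets; a functionally $G_\delta$-set is a countable intersection of functionally open sets. $\mathrm{B}_1(X,Y)$ is the set of mappings $f:X\to Y$ that are pointwise limits of sequences of continuous mappings $X\to Y$. $\mathrm{K}_1(X,Y)$ is the set of mappings $f:X\to Y$ such that $f^{-1}(V)$ is a functionally $F_\sigma$-set in $X$ for every open $V\subseteq Y$. A family $(A_i:i\in I)$ of subsets of $X$ is strongly functionally discrete (sfd) if there is a discrete family $(U_i:i\in I)$ of functionally open subsets of $X$ with $\overline{A_i}\subseteq U_i$ for all $i$ (a family is discrete if every point has a neighborhood meeting at most one member). A family is $\sigma$-sfd if it is a countable union of sfd families. A family $\mathcal B$ of subsets of $X$ is a base for $f:X\to Y$ if for every open $V\subseteq Y$, $f^{-1}(V)$ is a union of members of $\mathcal B$. $\Sigma^f(X,Y)$ is the set of mappings $f:X\to Y$ having a $\sigma$-sfd base; $\Sigma^{f*}_0(X,Y)$ is the set of mappings $f:X\to Y$ having a $\sigma$-sfd base consisting of functionally closed subsets of $X$. *)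

From Stdlib Require Export Reals.
Open Scope R_scope.

Definition set (X : Type) := X -> Prop.

Record Topology (X : Type) := {
  is_open : set X -> Prop;
  open_full : is_open (fun _ => True);
  open_inter : forall U V, is_open U -> is_open V -> is_open (fun x => U x /\ V x);
  open_union : forall F : set (set X), (forall U, F U -> is_open U) ->
                 is_open (fun x => exists U, F U /\ U x)
}.
Arguments is_open {X} _ _.

Definition R_open (V : set R) : Prop :=
  forall r, V r -> exists eps, 0 < eps /\ forall s, Rabs (s - r) < eps -> V s.

Definition continuous {X Y : Type} (TX : Topology X) (TY : Topology Y) (f : X -> Y) : Prop :=
  forall V, is_open TY V -> is_open TX (fun x => V (f x)).

Definition continuous_R {X : Type} (TX : Topology X) (phi : X -> R) : Prop :=
  forall V, R_open V -> is_open TX (fun x => V (phi x)).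

Definition cont01 {X : Type} (TX : Topology X) (phi : X -> R) : Prop :=
  continuous_R TX phi /\ forall x, 0 <= phi x <= 1.

Definition func_closed {X : Type} (TX : Topology X) (A : set X) : Prop :=
  exists phi, cont01 TX phi /\ forall x, A x <-> phi x = 0.

Definition func_open {X : Type} (TX : Topology X) (A : set X) : Prop :=
  exists phi, cont01 TX phi /\ forall x, A x <-> phi x <> 0.

Definition func_Fsigma {X : Type} (TX : Topology X) (A : set X) : Prop :=
  exists F : nat -> set X, (forall n, func_closed TX (F n)) /\
    forall x, A x <-> exists n, F n x.

Definition closure {X : Type} (TX : Topology X) (A : set X) : set X :=
  fun x => forall W, is_open TX W -> W x -> exists y, W y /\ A y.

Definition metrizable {Y : Type} (TY : Topology Y) : Prop :=
  exists d : Y -> Y -> R,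
    (forall x y, d x y = 0 <-> x = y) /\
    (forall x y, d x y = d y x) /\
    (forall x y z, d x z <= d x y + d y z) /\
    (forall U, is_open TY U <->
       forall y, U y -> exists eps, 0 < eps /\ forall z, d y z < eps -> U z).

Definition pointwise_limit {X Y : Type} (TY : Topology Y)
  (fn : nat -> X -> Y) (f : X -> Y) : Prop :=
  forall x V, is_open TY V -> V (f x) ->
    exists N, forall n, (N <= n)%nat -> V (fn n x).

Definition Baire1 {X Y : Type} (TX : Topology X) (TY : Topology Y) (f : X -> Y) : Prop :=
  exists fn : nat -> X -> Y, (forall n, continuous TX TY (fn n)) /\ pointwise_limit TY fn f.

Definition K1 {X Y : Type} (TX : Topology X) (TY : Topology Y) (f : X -> Y) : Prop :=
  forall V, is_open TY V -> func_Fsigma TX (fun x => V (f x)).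

Definition discrete_family {X I : Type} (TX : Topology X) (U : I -> set X) : Prop :=
  forall x, exists W, is_open TX W /\ W x /\
    forall i j, (exists y, W y /\ U i y) -> (exists y, W y /\ U j y) -> i = j.

Definition sfd {X I : Type} (TX : Topology X) (A : I -> set X) : Prop :=
  exists U : I -> set X,
    (forall i, func_open TX (U i)) /\ discrete_family TX U /\
    forall i x, closure TX (A i) x -> U i x.

Definition sigma_sfd {X I : Type} (TX : Topology X) (A : I -> set X) : Prop :=
  exists c : I -> nat, forall n : nat,
    sfd TX (fun i : {i : I | c i = n} => A (proj1_sig i)).

Definition base_for {X Y I : Type} (TY : Topology Y) (B : I -> set X) (f : X -> Y) : Prop :=
  forall V, is_open TY V ->
    forall x, V (f x) <-> exists i, B i x /\ forall z, B i z -> V (f z).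

Definition SigmaF {X Y : Type} (TX : Topology X) (TY : Topology Y) (f : X -> Y) : Prop :=
  exists (I : Type) (B : I -> set X), sigma_sfd TX B /\ base_for TY B f.

Definition SigmaF0star {X Y : Type} (TX : Topology X) (TY : Topology Y) (f : X -> Y) : Prop :=
  exists (I : Type) (B : I -> set X), sigma_sfd TX B /\ base_for TY B f /\
    forall i, func_closed TX (B i).

(* A sigma-sfd family amounts to a countable colouring
   of its members together with continuous [psi_i : X -> [0,1]] whose cozero sets
   contain the closures of the members and are discrete within each colour.

   Sigma^f*_0 in K_1: the infimum of continuous [0,1]-valued functions that are
   [1] off a discrete family of sets is locally one of them, hence continuous; so
   a discrete union of functionally closed sets is functionally closed.  Cutting a
   member [B_i] of the base down to [psi_i >= 1/(k+1)] writes [f^-1(V)] as a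
   countable union of such discrete unions.

   K_1 and Sigma^f give Sigma^f*_0: refine each base member [B_i] by the
   functionally closed pieces of [f^-1] of the [1/(m+1)]-neighbourhood of
   [f(B_i)], cut down to [psi_i >= 1/(k+1)].

   B_1 in K_1: [f^-1(V)] is the union over [m, k] of the functionally closed sets
   [{x | d(f_n x, Y \ V) >= 1/(m+1) for all n >= k}].

   B_1 in Sigma^f: Stone's construction gives, for all [m, n], a
   [1/(n+1)]-separated family [(D_(m,n,c))_c] of sets of radius [<= 1/(m+1)] such
   that every small ball lies in one of them; the sets
   [{x | f_j x in D_(m,n,c) for all j >= k}] form the sigma-sfd base, discreteness
   coming from the continuity of [f_k]. *)

From Stdlib Require Import Lra Lia Classical ClassicalEpsilon FunctionalExtensionality
  PropExtensionality ProofIrrelevance Cantor.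
From mathcomp Require boolp wochoice.
Import (canonicals) boolp.

Lemma set_ext {X : Type} (A B : set X) : (forall x, A x <-> B x) -> A = B.
Proof.
  intros H. apply functional_extensionality. intros x.
  apply propositional_extensionality, H.
Qed.

Lemma R_open_ball (c e : R) : R_open (fun s => Rabs (s - c) < e).
Proof.
  intros r Hr. exists (e - Rabs (r - c)). split; [lra|].
  intros s Hs.
  assert (Rabs (s - c) <= Rabs (s - r) + Rabs (r - c)).
  { replace (s - c) with ((s - r) + (r - c)) by ring. apply Rabs_triang. }
  lra.
Qed.

Lemma R_open_lt (c : R) : R_open (fun s => s < c).
Proof.
  intros r Hr. exists (c - r). split; [lra|].
  intros s Hs. pose proof (Rle_abs (s - r)). lra.
Qed.

Lemma Rmax_lipschitz a b a' b' : Rabs (Rmax a b - Rmax a' b') <= Rabs (a - a') + Rabs (b - b').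
Proof.
  unfold Rmax. destruct (Rle_dec a b), (Rle_dec a' b');
  repeat match goal with |- context [Rabs ?t] =>
    destruct (Rcase_abs t); [rewrite (Rabs_left t) by lra | rewrite (Rabs_right t) by lra]
  end; lra.
Qed.

Lemma Rmin_lipschitz a b a' b' : Rabs (Rmin a b - Rmin a' b') <= Rabs (a - a') + Rabs (b - b').
Proof.
  unfold Rmin. destruct (Rle_dec a b), (Rle_dec a' b');
  repeat match goal with |- context [Rabs ?t] =>
    destruct (Rcase_abs t); [rewrite (Rabs_left t) by lra | rewrite (Rabs_right t) by lra]
  end; lra.
Qed.

Section TopologyFacts.
Context {X : Type} (T : Topology X).

Lemma open_ext (A B : set X) : is_open T A -> (forall x, A x <-> B x) -> is_open T B.
Proof. intros HA H. rewrite <- (set_ext A B H). exact HA. Qed.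

Lemma open_of_local (A : set X) :
  (forall x, A x -> exists W, is_open T W /\ W x /\ forall z, W z -> A z) -> is_open T A.
Proof.
  intros H.
  apply (open_ext (fun x => exists U, (is_open T U /\ forall z, U z -> A z) /\ U x)).
  - apply open_union. intros U [HU _]. exact HU.
  - intros x. split.
    + intros [U [[_ HUA] Ux]]. auto.
    + intros Ax. destruct (H x Ax) as [W [HW [Wx HWA]]]. exists W. auto.
Qed.

Lemma open_finite_inter (W : nat -> set X) (N : nat) :
  (forall n, is_open T (W n)) -> is_open T (fun x => forall n, (n < N)%nat -> W n x).
Proof.
  intros HW. induction N as [|N IH].
  - apply (open_ext (fun _ => True)); [apply open_full|].
    intros x. split; [intros _ n Hn; lia | auto].
  - apply (open_ext (fun x => (forall n, (n < N)%nat -> W n x) /\ W N x)).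
    + apply open_inter; auto.
    + intros x. split.
      * intros [H1 H2] n Hn. destruct (Nat.eq_dec n N) as [->|]; auto. apply H1. lia.
      * intros H. split; auto.
Qed.

Lemma continuous_R_of_local (h : X -> R) :
  (forall x eps, 0 < eps -> exists W, is_open T W /\ W x /\
      forall z, W z -> Rabs (h z - h x) < eps) -> continuous_R T h.
Proof.
  intros H V HV. apply open_of_local. intros x Vx.
  destruct (HV _ Vx) as [e [He HVe]].
  destruct (H x e He) as [W [HW [Wx HWe]]].
  exists W. auto.
Qed.

Lemma continuous_R_local (h : X -> R) : continuous_R T h ->
  forall x eps, 0 < eps -> exists W, is_open T W /\ W x /\
      forall z, W z -> Rabs (h z - h x) < eps.
Proof.
  intros H x e He. exists (fun z => Rabs (h z - h x) < e). repeat split; auto.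
  - apply (H (fun s => Rabs (s - h x) < e)), R_open_ball.
  - rewrite Rminus_diag, Rabs_R0. exact He.
Qed.

Lemma continuous_R_of_locally_eq (h : X -> R) :
  (forall x, exists W g, is_open T W /\ W x /\ continuous_R T g /\ forall z, W z -> h z = g z) ->
  continuous_R T h.
Proof.
  intros H. apply continuous_R_of_local. intros x e He.
  destruct (H x) as [W [g [HW [Wx [Hg Heq]]]]].
  destruct (continuous_R_local g Hg x e He) as [W' [HW' [W'x HW'e]]].
  exists (fun z => W z /\ W' z). repeat split; auto.
  - apply open_inter; auto.
  - intros z [Wz W'z]. rewrite (Heq z Wz), (Heq x Wx). auto.
Qed.

Lemma continuous_R_const (a : R) : continuous_R T (fun _ => a).
Proof.
  apply continuous_R_of_local. intros x e He. exists (fun _ => True). repeat split; auto.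
  - apply open_full.
  - intros z _. rewrite Rminus_diag, Rabs_R0. exact He.
Qed.

Lemma continuous_R_lipschitz_comp (h : X -> R) (F : R -> R) (K : R) :
  0 < K -> (forall a b, Rabs (F a - F b) <= K * Rabs (a - b)) ->
  continuous_R T h -> continuous_R T (fun x => F (h x)).
Proof.
  intros HK HF Hh. apply continuous_R_of_local. intros x e He.
  destruct (continuous_R_local h Hh x (e / K)) as [W [HW [Wx HWe]]].
  { apply Rdiv_lt_0_compat; auto. }
  exists W. repeat split; auto. intros z Wz.
  specialize (HWe z Wz). specialize (HF (h z) (h x)).
  assert (K * Rabs (h z - h x) < K * (e / K)) by (apply Rmult_lt_compat_l; auto).
  replace (K * (e / K)) with e in H by (field; lra). lra.
Qed.

Lemma continuous_R_max (h1 h2 : X -> R) :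
  continuous_R T h1 -> continuous_R T h2 -> continuous_R T (fun x => Rmax (h1 x) (h2 x)).
Proof.
  intros H1 H2. apply continuous_R_of_local. intros x e He.
  destruct (continuous_R_local h1 H1 x (e / 2)) as [W1 [HW1 [W1x HW1e]]]; [lra|].
  destruct (continuous_R_local h2 H2 x (e / 2)) as [W2 [HW2 [W2x HW2e]]]; [lra|].
  exists (fun z => W1 z /\ W2 z). repeat split; auto.
  - apply open_inter; auto.
  - intros z [W1z W2z]. specialize (HW1e z W1z). specialize (HW2e z W2z).
    pose proof (Rmax_lipschitz (h1 z) (h2 z) (h1 x) (h2 x)). lra.
Qed.

Lemma continuous_R_scale (h : X -> R) (K : R) :
  0 < K -> continuous_R T h -> continuous_R T (fun x => K * h x).
Proof.
  intros HK Hh. apply (continuous_R_lipschitz_comp h (fun a => K * a) K); auto.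
  intros a b. rewrite <- Rmult_minus_distr_l, Rabs_mult, (Rabs_right K) by lra. lra.
Qed.

Lemma continuous_R_clip (h : X -> R) (K : R) :
  0 < K -> continuous_R T h -> continuous_R T (fun x => Rmax 0 (1 - K * h x)).
Proof.
  intros HK Hh. apply (continuous_R_lipschitz_comp h (fun a => Rmax 0 (1 - K * a)) K); auto.
  intros a b. pose proof (Rmax_lipschitz 0 (1 - K * a) 0 (1 - K * b)) as H.
  replace (1 - K * a - (1 - K * b)) with (K * (b - a)) in H by ring.
  rewrite Rminus_diag, Rabs_R0, Rabs_mult, (Rabs_right K), (Rabs_minus_sym b a) in H by lra.
  lra.
Qed.

Lemma subset_closure (A : set X) x : A x -> closure T A x.
Proof. intros Ax W _ Wx. exists x. auto. Qed.

Lemma closure_superlevel (A : set X) (h : X -> R) (c : R) x :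
  continuous_R T h -> (forall z, A z -> c <= h z) -> closure T A x -> c <= h x.
Proof.
  intros Hh HA Hcl. apply Rnot_lt_le. intros Hlt.
  destruct (Hcl (fun z => h z < c)) as [y [Hy Ay]]; auto.
  - apply (Hh (fun s => s < c)), R_open_lt.
  - specialize (HA y Ay). lra.
Qed.

End TopologyFacts.

Lemma continuous_R_comp {X Y} (TX : Topology X) (TY : Topology Y) (F : X -> Y) (g : Y -> R) :
  continuous TX TY F -> continuous_R TY g -> continuous_R TX (fun x => g (F x)).
Proof. intros HF Hg V HV. apply (HF (fun y => V (g y))), Hg, HV. Qed.

(* [inf01 g] is the infimum of [1] and of the values [max 0 (g j)], so it always
   exists; it is obtained from Stdlib's supremum [completeness] by negation. *)
Section BoundedInf.
Context {J : Type} (g : J -> R).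

Definition neg_clipped_values (t : R) : Prop := t = -1 \/ exists j, t = - Rmax 0 (g j).

Lemma neg_clipped_values_bound : bound neg_clipped_values.
Proof.
  exists 0. intros t [-> | [j ->]]; [lra|]. pose proof (Rmax_l 0 (g j)). lra.
Qed.

Lemma neg_clipped_values_inhabited : exists t, neg_clipped_values t.
Proof. exists (-1). left. reflexivity. Qed.

Definition inf01 : R :=
  - proj1_sig (completeness _ neg_clipped_values_bound neg_clipped_values_inhabited).

Lemma inf01_is_lub : is_lub neg_clipped_values (- inf01).
Proof. unfold inf01. rewrite Ropp_involutive. apply (proj2_sig (completeness _ _ _)). Qed.

Lemma inf01_ge0 : 0 <= inf01.
Proof.
  destruct inf01_is_lub as [_ Hlub].
  enough (- inf01 <= 0) by lra. apply Hlub.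
  intros t [-> | [j ->]]; [lra|]. pose proof (Rmax_l 0 (g j)). lra.
Qed.

Lemma inf01_le1 : inf01 <= 1.
Proof.
  destruct inf01_is_lub as [Hub _]. enough (-1 <= - inf01) by lra.
  apply Hub. left. reflexivity.
Qed.

Lemma inf01_le j : inf01 <= Rmax 0 (g j).
Proof.
  destruct inf01_is_lub as [Hub _]. enough (- Rmax 0 (g j) <= - inf01) by lra.
  apply Hub. right. eauto.
Qed.

Lemma inf01_glb t : t <= 1 -> (forall j, t <= Rmax 0 (g j)) -> t <= inf01.
Proof.
  intros H1 H2. destruct inf01_is_lub as [_ Hlub].
  enough (- inf01 <= - t) by lra. apply Hlub.
  intros u [-> | [j ->]]; [lra|]. specialize (H2 j). lra.
Qed.

Lemma inf01_lt t : inf01 < t -> t <= 1 -> exists j, g j < t.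
Proof.
  intros H1 H2. apply NNPP. intros Hnone.
  enough (t <= inf01) by lra. apply inf01_glb; auto.
  intros j. assert (~ g j < t) by eauto. pose proof (Rmax_r 0 (g j)). lra.
Qed.

Lemma inf01_single j0 : (forall j, j <> j0 -> g j = 1) -> 0 <= g j0 <= 1 -> inf01 = g j0.
Proof.
  intros Hothers Hj0. apply Rle_antisym.
  - pose proof (inf01_le j0). rewrite Rmax_right in H by lra. exact H.
  - apply inf01_glb; [lra|]. intros j. destruct (classic (j = j0)) as [->|Hne].
    + rewrite Rmax_right; lra.
    + rewrite (Hothers j Hne), Rmax_right; lra.
Qed.

Lemma inf01_const1 : (forall j, g j = 1) -> inf01 = 1.
Proof.
  intros H. apply Rle_antisym; [apply inf01_le1|].
  apply inf01_glb; [lra|]. intros j. rewrite H, Rmax_right; lra.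
Qed.

End BoundedInf.

Lemma inf01_lipschitz {J} (g g' : J -> R) (delta : R) : 0 <= delta ->
  (forall j, Rabs (g j - g' j) <= delta) -> Rabs (inf01 g - inf01 g') <= delta.
Proof.
  intros Hdelta.
  assert (Hside : forall h h' : J -> R, (forall j, Rabs (h j - h' j) <= delta) ->
            inf01 h <= inf01 h' + delta).
  { intros h h' H. enough (inf01 h - delta <= inf01 h') by lra.
    apply inf01_glb.
    - pose proof (inf01_le1 h). lra.
    - intros j. pose proof (inf01_le h j). specialize (H j).
      pose proof (Rmax_lipschitz 0 (h j) 0 (h' j)) as Hl.
      rewrite Rminus_diag, Rabs_R0, Rplus_0_l in Hl.
      pose proof (Rle_abs (Rmax 0 (h j) - Rmax 0 (h' j))). lra. }
  intros H. apply Rabs_le. split.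
  - enough (inf01 g' <= inf01 g + delta) by lra.
    apply Hside. intros j. rewrite Rabs_minus_sym. apply H.
  - pose proof (Hside g g' H). lra.
Qed.

Definition sup01 {J} (g : J -> R) : R := 1 - inf01 (fun j => 1 - g j).

Lemma sup01_bounds {J} (g : J -> R) : 0 <= sup01 g <= 1.
Proof.
  unfold sup01. pose proof (inf01_ge0 (fun j => 1 - g j)).
  pose proof (inf01_le1 (fun j => 1 - g j)). lra.
Qed.

Lemma sup01_ge {J} (g : J -> R) j : Rmin 1 (g j) <= sup01 g.
Proof.
  unfold sup01. pose proof (inf01_le (fun j => 1 - g j) j). cbn in H.
  unfold Rmin, Rmax in *. destruct (Rle_dec 1 (g j)), (Rle_dec 0 (1 - g j)); lra.
Qed.

Lemma sup01_lub {J} (g : J -> R) t : 0 <= t -> (forall j, Rmin 1 (g j) <= t) -> sup01 g <= t.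
Proof.
  intros Ht H. unfold sup01. enough (1 - t <= inf01 (fun j => 1 - g j)) by lra.
  destruct (Rle_dec t 1).
  - apply inf01_glb; [lra|]. intros j. specialize (H j).
    unfold Rmin, Rmax in *. destruct (Rle_dec 1 (g j)), (Rle_dec 0 (1 - g j)); lra.
  - pose proof (inf01_ge0 (fun j => 1 - g j)). lra.
Qed.

Lemma sup01_lipschitz {J} (g g' : J -> R) (delta : R) : 0 <= delta ->
  (forall j, Rabs (g j - g' j) <= delta) -> Rabs (sup01 g - sup01 g') <= delta.
Proof.
  intros Hdelta H. unfold sup01.
  replace (1 - inf01 (fun j => 1 - g j) - (1 - inf01 (fun j => 1 - g' j)))
    with (- (inf01 (fun j => 1 - g j) - inf01 (fun j => 1 - g' j))) by ring.
  rewrite Rabs_Ropp. apply inf01_lipschitz; auto.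
  intros j. replace (1 - g j - (1 - g' j)) with (- (g j - g' j)) by ring.
  rewrite Rabs_Ropp. apply H.
Qed.

Definition inv_succ (n : nat) : R := / INR (S n).

Lemma INR_succ_pos n : 0 < INR (S n).
Proof. apply lt_0_INR. lia. Qed.

Lemma inv_succ_pos n : 0 < inv_succ n.
Proof. apply Rinv_0_lt_compat, INR_succ_pos. Qed.

Lemma inv_succ_le1 n : inv_succ n <= 1.
Proof.
  unfold inv_succ. rewrite <- Rinv_1. apply Rinv_le_contravar; [lra|].
  rewrite S_INR. pose proof (pos_INR n). lra.
Qed.

Lemma inv_succ_antitone n m : (n <= m)%nat -> inv_succ m <= inv_succ n.
Proof.
  intros H. apply Rinv_le_contravar; [apply INR_succ_pos|]. apply le_INR. lia.
Qed.

Lemma inv_succ_lt e : 0 < e -> exists n, inv_succ n < e.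
Proof.
  intros He. destruct (INR_archimed e 1 He) as [n Hn]. exists n.
  pose proof (INR_succ_pos n). pose proof (le_INR n (S n) (Nat.le_succ_diag_r n)).
  apply (Rmult_lt_reg_l (INR (S n))); auto. unfold inv_succ. rewrite Rinv_r by lra. nra.
Qed.

Lemma inv_succ_le_iff m t : inv_succ m <= t <-> 1 <= INR (S m) * t.
Proof.
  unfold inv_succ. pose proof (INR_succ_pos m). split; intros H1.
  - apply (Rmult_le_compat_l (INR (S m))) in H1; [|lra]. rewrite Rinv_r in H1 by lra. lra.
  - apply (Rmult_le_reg_l (INR (S m))); auto. rewrite Rinv_r by lra. lra.
Qed.

Lemma inv_succ_scale_ge1 t : 0 < t -> exists k, 1 <= INR (S k) * t.
Proof.
  intros Ht. destruct (inv_succ_lt t Ht) as [k Hk]. exists k.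
  apply inv_succ_le_iff. lra.
Qed.

Section FunctionallyClosed.
Context {X : Type} (T : Topology X).

Lemma func_closed_ext (A B : set X) :
  func_closed T A -> (forall x, A x <-> B x) -> func_closed T B.
Proof. intros H E. rewrite <- (set_ext A B E). exact H. Qed.

Lemma func_closed_inter (A B : set X) :
  func_closed T A -> func_closed T B -> func_closed T (fun x => A x /\ B x).
Proof.
  intros [p [[Hp Hp01] HA]] [q [[Hq Hq01] HB]].
  exists (fun x => Rmax (p x) (q x)). split; [split|].
  - apply continuous_R_max; auto.
  - intros x. specialize (Hp01 x). specialize (Hq01 x).
    unfold Rmax. destruct (Rle_dec (p x) (q x)); lra.
  - intros x. rewrite HA, HB. specialize (Hp01 x). specialize (Hq01 x).
    unfold Rmax. destruct (Rle_dec (p x) (q x)); split; intros; lra.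
Qed.

Lemma func_closed_superlevel (psi : X -> R) (K : R) :
  0 < K -> cont01 T psi -> func_closed T (fun x => 1 <= K * psi x).
Proof.
  intros HK [Hpsi Hpsi01].
  exists (fun x => Rmax 0 (1 - K * psi x)). split; [split|].
  - apply continuous_R_clip; auto.
  - intros x. specialize (Hpsi01 x). unfold Rmax. destruct (Rle_dec 0 (1 - K * psi x)); nra.
  - intros x. unfold Rmax. destruct (Rle_dec 0 (1 - K * psi x)); split; intros; lra.
Qed.

(* Damping the [n]-th witness by [inv_succ n] makes the supremum continuous. *)
Lemma continuous_R_damped_sup (p : nat -> X -> R) : (forall n, cont01 T (p n)) ->
  continuous_R T (fun x => sup01 (fun n => Rmin (p n x) (inv_succ n))).
Proof.
  intros Hp. apply continuous_R_of_local. intros x e He.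
  destruct (inv_succ_lt (e / 2)) as [N HN]; [lra|].
  exists (fun z => forall n, (n < N)%nat -> Rabs (p n z - p n x) < e / 2).
  split; [|split].
  - apply (open_finite_inter T (fun n z => Rabs (p n z - p n x) < e / 2)).
    intros n. apply (proj1 (Hp n) (fun s => Rabs (s - p n x) < e / 2)), R_open_ball.
  - intros n _. rewrite Rminus_diag, Rabs_R0. lra.
  - intros z Hz.
    enough (Rabs (sup01 (fun n => Rmin (p n z) (inv_succ n))
                  - sup01 (fun n => Rmin (p n x) (inv_succ n))) <= e / 2) by lra.
    apply sup01_lipschitz; [lra|]. intros n.
    destruct (Nat.lt_ge_cases n N) as [Hn|Hn].
    + pose proof (Rmin_lipschitz (p n z) (inv_succ n) (p n x) (inv_succ n)) as Hl.
      specialize (Hz n Hn). rewrite Rminus_diag, Rabs_R0 in Hl. lra.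
    + pose proof (inv_succ_antitone N n Hn). pose proof (inv_succ_pos n).
      pose proof (proj2 (Hp n) z). pose proof (proj2 (Hp n) x).
      apply Rabs_le. unfold Rmin.
      destruct (Rle_dec (p n z) (inv_succ n)), (Rle_dec (p n x) (inv_succ n)); split; lra.
Qed.

Lemma func_closed_countable_inter (G : nat -> set X) :
  (forall n, func_closed T (G n)) -> func_closed T (fun x => forall n, G n x).
Proof.
  intros HG. destruct (choice _ HG) as [p Hp].
  exists (fun x => sup01 (fun n => Rmin (p n x) (inv_succ n))). split; [split|].
  - apply continuous_R_damped_sup. intros n. apply Hp.
  - intros x. apply sup01_bounds.
  - intros x. split.
    + intros H. apply Rle_antisym; [|apply sup01_bounds].
      apply sup01_lub; [lra|]. intros n. rewrite (proj1 (proj2 (Hp n) x) (H n)).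
      pose proof (inv_succ_pos n). unfold Rmin. repeat destruct Rle_dec; lra.
    + intros H n. apply (proj2 (Hp n)).
      pose proof (sup01_ge (fun n => Rmin (p n x) (inv_succ n)) n) as Hge. cbn in Hge.
      rewrite H in Hge. pose proof (proj2 (proj1 (Hp n)) x).
      pose proof (inv_succ_pos n). pose proof (inv_succ_le1 n).
      unfold Rmin in Hge. repeat destruct Rle_dec in Hge; lra.
Qed.

Lemma func_closed_tail_inter (G : nat -> set X) (k : nat) :
  (forall n, func_closed T (G n)) -> func_closed T (fun x => forall n, (k <= n)%nat -> G n x).
Proof.
  intros HG. apply (func_closed_ext (fun x => forall n, G (k + n)%nat x)).
  - apply func_closed_countable_inter. intros n. apply HG.
  - intros x. split.
    + intros H n Hn. replace n with (k + (n - k))%nat by lia. apply H.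
    + intros H n. apply H. lia.
Qed.

End FunctionallyClosed.

Definition code3 (t : nat * (nat * nat)) : nat := Cantor.to_nat (fst t, Cantor.to_nat (snd t)).

Lemma code3_inj t t' : code3 t = code3 t' -> t = t'.
Proof.
  destruct t as [a [b c]], t' as [a' [b' c']]. unfold code3. cbn [fst snd]. intros E.
  apply Cantor.to_nat_inj in E.
  assert (E' : (b, c) = (b', c')) by (apply Cantor.to_nat_inj; congruence).
  congruence.
Qed.

Section DiscreteFamilies.
Context {X : Type} (T : Topology X).

Lemma discrete_family_mono {I} (U U' : I -> set X) :
  (forall i x, U' i x -> U i x) -> discrete_family T U -> discrete_family T U'.
Proof.
  intros Hsub HU x. destruct (HU x) as [W [HW [Wx Huniq]]].
  exists W. repeat split; auto.
  intros i j [y [Wy Hy]] [y' [Wy' Hy']]. apply Huniq; eauto.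
Qed.

Definition discrete_on {I} (P : I -> Prop) (U : I -> set X) : Prop :=
  forall x, exists W, is_open T W /\ W x /\ forall i j, P i -> P j ->
    (exists y, W y /\ U i y) -> (exists y, W y /\ U j y) -> i = j.

Lemma discrete_on_mono {I} (P P' : I -> Prop) (U U' : I -> set X) :
  (forall i, P' i -> P i) -> (forall i x, U' i x -> U i x) ->
  discrete_on P U -> discrete_on P' U'.
Proof.
  intros HP HU Hd x. destruct (Hd x) as [W [HW [Wx Huniq]]].
  exists W. repeat split; auto.
  intros i j Pi Pj [y [Wy Hy]] [y' [Wy' Hy']]. apply Huniq; eauto.
Qed.

Lemma discrete_family_sig {I} (P : I -> Prop) (U : I -> set X) :
  discrete_on P U -> discrete_family T (fun s : {i | P i} => U (proj1_sig s)).
Proof.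
  intros Hd x. destruct (Hd x) as [W [HW [Wx Huniq]]].
  exists W. repeat split; auto.
  intros [i Pi] [j Pj] Hi Hj. cbn in *.
  destruct (Huniq i j Pi Pj Hi Hj). f_equal. apply proof_irrelevance.
Qed.

Lemma discrete_on_sig {I} (P : I -> Prop) (U : I -> set X) :
  discrete_family T (fun s : {i | P i} => U (proj1_sig s)) -> discrete_on P U.
Proof.
  intros Hd x. destruct (Hd x) as [W [HW [Wx Huniq]]].
  exists W. repeat split; auto.
  intros i j Pi Pj Hi Hj.
  exact (f_equal (@proj1_sig _ _) (Huniq (exist _ i Pi) (exist _ j Pj) Hi Hj)).
Qed.

Lemma inf01_locally_single {J} (G : J -> X -> R) :
  (forall j x, 0 <= G j x <= 1) -> discrete_family T (fun j x => G j x <> 1) ->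
  forall x, exists W, is_open T W /\ W x /\
    ((exists j, forall z, W z -> inf01 (fun j => G j z) = G j z) \/
     (forall z, W z -> inf01 (fun j => G j z) = 1)).
Proof.
  intros H01 Hd x. destruct (Hd x) as [W [HW [Wx Huniq]]].
  exists W. split; [exact HW|]. split; [exact Wx|].
  destruct (classic (exists j y, W y /\ G j y <> 1)) as [[j0 Hj0]|Hnone].
  - left. exists j0. intros z Wz. apply (inf01_single (fun j => G j z) j0); [|apply H01].
    intros j Hj. apply NNPP. intros Hz. apply Hj, Huniq; eauto.
  - right. intros z Wz. apply (inf01_const1 (fun j => G j z)).
    intros j. apply NNPP. intros Hz. apply Hnone. eauto.
Qed.

Lemma func_closed_discrete_union {J} (A S : J -> set X) :
  discrete_family T S ->
  (forall j, exists G, cont01 T G /\ (forall x, A j x <-> G x = 0) /\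
                       (forall x, G x <> 1 -> S j x)) ->
  func_closed T (fun x => exists j, A j x).
Proof.
  intros HS HA. destruct (choice _ HA) as [G HG].
  assert (HGc : forall j, continuous_R T (G j)) by apply HG.
  assert (HG01 : forall j x, 0 <= G j x <= 1) by apply HG.
  assert (HGA : forall j x, A j x <-> G j x = 0) by apply HG.
  assert (Hloc := inf01_locally_single G HG01
            (discrete_family_mono S _ (fun j => proj2 (proj2 (HG j))) HS)).
  exists (fun x => inf01 (fun j => G j x)). split; [split|].
  - apply continuous_R_of_locally_eq. intros x.
    destruct (Hloc x) as [W [HW [Wx [[j Hj] | H1]]]].
    + exists W, (G j). auto.
    + exists W, (fun _ => 1). repeat split; auto. apply continuous_R_const.
  - intros x. split; [apply inf01_ge0 | apply inf01_le1].
  - intros x. split.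
    + intros [j Ajx]. apply Rle_antisym; [|apply inf01_ge0].
      pose proof (inf01_le (fun j => G j x) j) as H. cbn in H.
      rewrite (proj1 (HGA j x) Ajx), Rmax_left in H by lra. exact H.
    + intros H0. destruct (Hloc x) as [W [_ [Wx [[j Hj] | H1]]]].
      * exists j. apply HGA. rewrite <- (Hj x Wx). exact H0.
      * rewrite (H1 x Wx) in H0. lra.
Qed.

Lemma func_closed_witness_supported (A : set X) (psi : X -> R) (K : R) :
  0 < K -> cont01 T psi -> func_closed T A -> (forall x, A x -> 1 <= K * psi x) ->
  exists G, cont01 T G /\ (forall x, A x <-> G x = 0) /\ (forall x, G x <> 1 -> psi x <> 0).
Proof.
  intros HK [Hpsi Hpsi01] [phi [[Hphi Hphi01] HA]] Hlevel.
  exists (fun x => Rmax (phi x) (Rmax 0 (1 - K * psi x))). split; [split|split].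
  - apply continuous_R_max; [exact Hphi | apply continuous_R_clip; auto].
  - intros x. specialize (Hphi01 x). specialize (Hpsi01 x).
    unfold Rmax. repeat destruct Rle_dec; nra.
  - intros x. specialize (Hphi01 x). split.
    + intros Ax. pose proof (Hlevel x Ax). rewrite (proj1 (HA x) Ax).
      unfold Rmax. repeat destruct Rle_dec; lra.
    + intros H0. apply HA. pose proof (Rmax_l (phi x) (Rmax 0 (1 - K * psi x))). lra.
  - intros x Hne Hzero. apply Hne. rewrite Hzero, Rmult_0_r, Rminus_0_r.
    specialize (Hphi01 x). unfold Rmax. repeat destruct Rle_dec; lra.
Qed.

End DiscreteFamilies.

Definition sigma_sfd_witness {X I} (T : Topology X) (A : I -> set X)
    (c : I -> nat) (psi : I -> X -> R) : Prop :=
  (forall i, cont01 T (psi i)) /\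
  (forall n, discrete_on T (fun i => c i = n) (fun i x => psi i x <> 0)) /\
  (forall i x, closure T (A i) x -> psi i x <> 0).

Lemma sigma_sfd_witness_exists {X I} (T : Topology X) (A : I -> set X) :
  sigma_sfd T A -> exists c psi, sigma_sfd_witness T A c psi.
Proof.
  intros [c Hc].
  pose (U n := proj1_sig (constructive_indefinite_description _ (Hc n))).
  assert (HU : forall n, (forall s, func_open T (U n s)) /\ discrete_family T (U n) /\
                 forall s x, closure T (A (proj1_sig s)) x -> U n s x)
    by (intros n; exact (proj2_sig (constructive_indefinite_description _ (Hc n)))).
  assert (Hopen : forall i, func_open T (U (c i) (exist _ i eq_refl))) by (intros i; apply HU).
  destruct (choice _ Hopen) as [psi Hpsi].
  assert (Hsupp : forall n (s : {i | c i = n}) x, U n s x <-> psi (proj1_sig s) x <> 0).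
  { intros n [i e] x. destruct e. apply Hpsi. }
  exists c, psi. split; [|split].
  - intros i. apply Hpsi.
  - intros n. apply discrete_on_sig.
    apply (discrete_family_mono T (U n)); [intros s x; apply Hsupp | apply HU].
  - intros i x Hcl. apply (Hsupp (c i) (exist _ i eq_refl)), HU, Hcl.
Qed.

Lemma sigma_sfd_of_witness {X I} (T : Topology X) (A : I -> set X) c psi :
  sigma_sfd_witness T A c psi -> sigma_sfd T A.
Proof.
  intros [Hpsi [Hdisc Hcl]]. exists c. intros n.
  exists (fun s x => psi (proj1_sig s) x <> 0). split; [|split].
  - intros s. exists (psi (proj1_sig s)). split; [apply Hpsi | tauto].
  - exact (discrete_family_sig T _ (fun i x => psi i x <> 0) (Hdisc n)).
  - intros s x. apply Hcl.
Qed.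

Lemma K1_of_SigmaF0star {X Y} (TX : Topology X) (TY : Topology Y) (f : X -> Y) :
  SigmaF0star TX TY f -> K1 TX TY f.
Proof.
  intros [I [B [Hs [Hbase HBclosed]]]] V HV.
  destruct (sigma_sfd_witness_exists _ _ Hs) as [c [psi [Hpsi [Hdisc Hcl]]]].
  pose (inside i := forall z, B i z -> V (f z)).
  pose (piece n k x := exists i, (c i = n /\ inside i) /\ B i x /\ 1 <= INR (S k) * psi i x).
  assert (Hpiece : forall n k, func_closed TX (piece n k)).
  { intros n k.
    apply (func_closed_ext TX (fun x => exists s : {i | c i = n /\ inside i},
             B (proj1_sig s) x /\ 1 <= INR (S k) * psi (proj1_sig s) x)).
    - apply (func_closed_discrete_union TX _ (fun s x => psi (proj1_sig s) x <> 0)).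
      + apply (discrete_family_sig TX (fun i => c i = n /\ inside i) (fun i x => psi i x <> 0)).
        apply (discrete_on_mono TX (fun i => c i = n) _ (fun i x => psi i x <> 0));
          [tauto | auto | apply Hdisc].
      + intros [i Hi]. cbn. apply (func_closed_witness_supported TX _ _ (INR (S k)));
          [apply INR_succ_pos | apply Hpsi | | tauto].
        apply func_closed_inter; [apply HBclosed |].
        apply func_closed_superlevel; [apply INR_succ_pos | apply Hpsi].
    - intros x. split.
      + intros [[i Hi] Hx]. exists i. auto.
      + intros [i [Hi Hx]]. exists (exist _ i Hi). exact Hx. }
  exists (fun N => piece (fst (Cantor.of_nat N)) (snd (Cantor.of_nat N))).
  split; [intros N; apply Hpiece |].
  intros x. split.
  - intros Hv. destruct (proj1 (Hbase V HV x) Hv) as [i [Bix Hi]].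
    assert (Hpos : 0 < psi i x).
    { pose proof (Hcl i x (subset_closure TX _ _ Bix)). pose proof (proj2 (Hpsi i) x). lra. }
    destruct (inv_succ_scale_ge1 _ Hpos) as [k Hk].
    exists (Cantor.to_nat (c i, k)). rewrite Cantor.cancel_of_to. exists i. auto.
  - intros [N [i [[_ Hi] [Bix _]]]]. exact (Hi x Bix).
Qed.

Lemma sigma_sfd_refine {X I J} (T : Topology X) (A : I -> set X) c psi
    (code : J -> nat) (C : I * J -> set X) (K : I * J -> R) :
  sigma_sfd_witness T A c psi -> (forall j j', code j = code j' -> j = j') ->
  (forall q, 0 < K q) -> (forall q x, C q x -> 1 <= K q * psi (fst q) x) ->
  sigma_sfd T C.
Proof.
  intros [Hpsi [Hdisc _]] Hcode HK HC.
  apply (sigma_sfd_of_witness T C (fun q => Cantor.to_nat (c (fst q), code (snd q)))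
           (fun q => psi (fst q))).
  split; [|split].
  - intros q. apply Hpsi.
  - intros N x. destruct (Hdisc (fst (Cantor.of_nat N)) x) as [W [HW [Wx Huniq]]].
    exists W. repeat split; auto.
    intros [i1 j1] [i2 j2] E1 E2 H1 H2. cbn [fst snd] in *.
    rewrite <- E2 in E1. subst N. apply Cantor.to_nat_inj in E1. injection E1 as Ec Ej.
    rewrite (Hcode j1 j2 Ej). f_equal.
    apply Huniq; auto; rewrite Cantor.cancel_of_to; cbn [fst]; congruence.
  - intros q x Hcl Hzero.
    pose proof (closure_superlevel T (C q) (fun x => K q * psi (fst q) x) 1 x
                  (continuous_R_scale T _ _ (HK q) (proj1 (Hpsi (fst q)))) (HC q) Hcl) as Hlevel.
    cbn beta in Hlevel. rewrite Hzero, Rmult_0_r in Hlevel. lra.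
Qed.

Lemma sigma_sfd_of_levels {X Z J} (T : Topology X) (A : Z * J -> set X)
    (code : J -> nat) (psi : Z * J -> X -> R) :
  (forall j j', code j = code j' -> j = j') ->
  (forall q, cont01 T (psi q)) ->
  (forall j, discrete_family T (fun z x => psi (z, j) x <> 0)) ->
  (forall q x, closure T (A q) x -> psi q x <> 0) ->
  sigma_sfd T A.
Proof.
  intros Hcode Hpsi Hdisc Hcl.
  apply (sigma_sfd_of_witness T A (fun q => code (snd q)) psi).
  split; [exact Hpsi | split; [|exact Hcl]].
  intros n x. destruct (classic (exists j, code j = n)) as [[j Hj] | Hnone].
  - destruct (Hdisc j x) as [W [HW [Wx Huniq]]].
    exists W. repeat split; auto.
    intros [z1 j1] [z2 j2] E1 E2 H1 H2. cbn in *.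
    rewrite <- Hj in E1, E2. apply Hcode in E1, E2. subst j1 j2.
    f_equal. apply Huniq; auto.
  - exists (fun _ => True). repeat split; [apply open_full|].
    intros [z1 j1] q2 E1. exfalso. apply Hnone. eauto.
Qed.

Lemma well_order_exists (Y : Type) : exists Rw : Y -> Y -> Prop,
  (forall x y, Rw x y -> Rw y x -> x = y) /\
  (forall P : set Y, (exists x, P x) -> exists z, P z /\ forall x, P x -> Rw z x).
Proof.
  destruct (wochoice.well_ordering_principle
              (eqtype.Equality.clone (boolp.classicType Y) _)) as [R HR].
  assert (Hmin : forall P : set Y, (exists x, P x) ->
            exists z, (P z /\ forall x, P x -> R z x = true) /\
              forall z', (P z' /\ forall x, P x -> R z' x = true) -> z = z').
  { intros P [x Px].
    destruct (HR (fun z => boolp.asbool (P z))) as [z [[Hz Hlb] Huniq]].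
    - exists x. apply boolp.asboolT. exact Px.
    - exists z. split.
      + split; [exact (@boolp.asboolW (P z) Hz)|].
        intros y Py. apply Hlb. apply boolp.asboolT. exact Py.
      + intros z' [Pz' Hz']. apply Huniq. split.
        * apply boolp.asboolT. exact Pz'.
        * intros y Hy. apply Hz'. exact (@boolp.asboolW (P y) Hy). }
  assert (Hrefl : forall x, R x x = true).
  { intros x. destruct (Hmin (fun z => z = x)) as [z [[-> Hz] _]]; eauto. }
  exists (fun x y => R x y = true). split.
  - intros x y Rxy Ryx.
    destruct (Hmin (fun z => z = x \/ z = y)) as [z [_ Huniq]]; [eauto|].
    transitivity z; [symmetry|]; apply Huniq; split; auto;
      intros u [-> | ->]; auto.
  - intros P HP. destruct (Hmin P HP) as [z [Hz _]]. exists z. exact Hz.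
Qed.

Section MetricSpace.
Context {Y : Type} (TY : Topology Y) (d : Y -> Y -> R)
  (d_zero_iff : forall x y, d x y = 0 <-> x = y)
  (d_sym : forall x y, d x y = d y x)
  (d_triangle : forall x y z, d x z <= d x y + d y z)
  (d_open_iff : forall U, is_open TY U <->
     forall y, U y -> exists eps, 0 < eps /\ forall z, d y z < eps -> U z).

Lemma d_self x : d x x = 0.
Proof. apply d_zero_iff. reflexivity. Qed.

Lemma d_nonneg x y : 0 <= d x y.
Proof. pose proof (d_triangle x y x). rewrite d_self, (d_sym y x) in H. lra. Qed.

Lemma d_ball_open y r : is_open TY (fun z => d y z < r).
Proof.
  apply d_open_iff. intros z Hz. exists (r - d y z). split; [lra|].
  intros u Hu. pose proof (d_triangle y z u). lra.
Qed.

Lemma open_has_ball V y : is_open TY V -> V y ->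
  exists e, 0 < e /\ forall z, d y z < e -> V z.
Proof. intros HV Vy. exact (proj1 (d_open_iff V) HV y Vy). Qed.

(* Truncated at 1 by [inf01], which is harmless for the uses below. *)
Definition dist_set (y : Y) (A : set Y) : R := inf01 (fun a : {a | A a} => d y (proj1_sig a)).

Lemma dist_set_bounds y A : 0 <= dist_set y A <= 1.
Proof. split; [apply inf01_ge0 | apply inf01_le1]. Qed.

Lemma dist_set_lipschitz y y' A : Rabs (dist_set y A - dist_set y' A) <= d y y'.
Proof.
  apply inf01_lipschitz; [apply d_nonneg|]. intros [a Ha]. cbn.
  apply Rabs_le. pose proof (d_triangle y y' a). pose proof (d_triangle y' y a).
  rewrite (d_sym y' y) in H0. split; lra.
Qed.

Lemma dist_set_continuous A : continuous_R TY (fun y => dist_set y A).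
Proof.
  apply continuous_R_of_local. intros y e He.
  exists (fun z => d y z < e). split; [apply d_ball_open | split].
  - rewrite d_self. exact He.
  - intros z Hz. pose proof (dist_set_lipschitz z y A). rewrite d_sym in H. lra.
Qed.

Lemma dist_set_le y A a : A a -> dist_set y A <= d y a.
Proof.
  intros Ha. pose proof (inf01_le (fun a : {a | A a} => d y (proj1_sig a)) (exist _ a Ha)).
  cbn in H. rewrite Rmax_right in H by apply d_nonneg. exact H.
Qed.

Lemma dist_set_zero y A : A y -> dist_set y A = 0.
Proof.
  intros Ay. pose proof (dist_set_le y A y Ay). rewrite d_self in H.
  pose proof (dist_set_bounds y A). lra.
Qed.

Lemma dist_set_lt y A t : dist_set y A < t -> t <= 1 -> exists a, A a /\ d y a < t.
Proof.
  intros H1 H2. destruct (inf01_lt _ t H1 H2) as [[a Ha] Hlt]. exists a. auto.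
Qed.

Lemma dist_set_ge y A t : t <= 1 -> (forall a, A a -> t <= d y a) -> t <= dist_set y A.
Proof.
  intros H1 H2. apply inf01_glb; auto. intros [a Ha]. cbn.
  pose proof (H2 a Ha). pose proof (Rmax_r 0 (d y a)). lra.
Qed.

Lemma dist_set_complement_pos V y : is_open TY V -> V y -> 0 < dist_set y (fun a => ~ V a).
Proof.
  intros HV Vy. destruct (open_has_ball V y HV Vy) as [e [He Hball]].
  apply (Rlt_le_trans _ (Rmin e 1)); [apply Rmin_glb_lt; lra|].
  apply dist_set_ge; [apply Rmin_r|].
  intros a Ha. apply Rnot_lt_le. intros Hlt. apply Ha, Hball.
  pose proof (Rmin_l e 1). lra.
Qed.

Definition bump (A : set Y) (r : R) (y : Y) : R := Rmax 0 (1 - / r * dist_set y A).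

Lemma bump_cont01 A r : 0 < r -> cont01 TY (bump A r).
Proof.
  intros Hr. split.
  - apply continuous_R_clip; [apply Rinv_0_lt_compat, Hr | apply dist_set_continuous].
  - intros y. pose proof (dist_set_bounds y A). pose proof (Rinv_0_lt_compat r Hr).
    unfold bump, Rmax. destruct Rle_dec; nra.
Qed.

Lemma bump_one A r y : A y -> bump A r y = 1.
Proof.
  intros Ay. unfold bump. rewrite dist_set_zero, Rmult_0_r, Rminus_0_r by exact Ay.
  apply Rmax_right. lra.
Qed.

Lemma bump_support A r y : 0 < r <= 1 -> bump A r y <> 0 -> exists a, A a /\ d y a < r.
Proof.
  intros Hr Hy. apply dist_set_lt; [|lra].
  unfold bump, Rmax in Hy. destruct Rle_dec in Hy; [|lra].
  assert (/ r * dist_set y A < 1) by lra.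
  apply (Rmult_lt_reg_l (/ r)); [apply Rinv_0_lt_compat; lra|].
  rewrite Rinv_l by lra. exact H.
Qed.

Lemma bump_supports_discrete {Z} (D : Z -> set Y) (s : R) :
  0 < s <= 1 -> (forall c1 c2 y1 y2, c1 <> c2 -> D c1 y1 -> D c2 y2 -> s <= d y1 y2) ->
  forall y y1 y2 c1 c2, d y y1 < s / 6 -> d y y2 < s / 6 ->
    bump (D c1) (s / 6) y1 <> 0 -> bump (D c2) (s / 6) y2 <> 0 -> c1 = c2.
Proof.
  intros Hs Hsep y y1 y2 c1 c2 Hy1 Hy2 H1 H2.
  assert (Hr : 0 < s / 6 <= 1) by lra.
  destruct (bump_support _ _ y1 Hr H1) as [a1 [Da1 Ha1]].
  destruct (bump_support _ _ y2 Hr H2) as [a2 [Da2 Ha2]].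
  apply NNPP. intros Hne. pose proof (Hsep c1 c2 a1 a2 Hne Da1 Da2).
  pose proof (d_triangle a1 y1 a2). pose proof (d_triangle y1 y a2).
  pose proof (d_triangle y y2 a2). rewrite (d_sym a1 y1) in H0. rewrite (d_sym y1 y) in H3.
  lra.
Qed.

Lemma pointwise_limit_ball {X} (fn : nat -> X -> Y) f : pointwise_limit TY fn f ->
  forall x e, 0 < e -> exists N, forall n, (N <= n)%nat -> d (f x) (fn n x) < e.
Proof.
  intros Hlim x e He. apply (Hlim x (fun z => d (f x) z < e)); [apply d_ball_open|].
  rewrite d_self. exact He.
Qed.

Lemma pointwise_limit_le {X} (fn : nat -> X -> Y) f y r k x : pointwise_limit TY fn f ->
  (forall n, (k <= n)%nat -> d y (fn n x) < r) -> d y (f x) <= r.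
Proof.
  intros Hlim H. apply Rnot_lt_le. intros Hlt.
  destruct (pointwise_limit_ball fn f Hlim x (d y (f x) - r)) as [N HN]; [lra|].
  specialize (HN (Nat.max k N) ltac:(lia)). specialize (H (Nat.max k N) ltac:(lia)).
  pose proof (d_triangle y (fn (Nat.max k N) x) (f x)).
  rewrite (d_sym (fn (Nat.max k N) x) (f x)) in H0. lra.
Qed.


Lemma K1_of_Baire1 {X} (TX : Topology X) (f : X -> Y) : Baire1 TX TY f -> K1 TX TY f.
Proof.
  intros [fn [Hfn Hlim]] V HV.
  pose (depth y := dist_set y (fun a => ~ V a)).
  pose (piece m k x := forall n, (k <= n)%nat -> 1 <= INR (S m) * depth (fn n x)).
  exists (fun N => piece (fst (Cantor.of_nat N)) (snd (Cantor.of_nat N))). split.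
  - intros N. apply func_closed_tail_inter. intros n.
    apply func_closed_superlevel; [apply INR_succ_pos|]. split.
    + apply (continuous_R_comp TX TY); [apply Hfn | apply dist_set_continuous].
    + intros x. apply dist_set_bounds.
  - intros x. split.
    + intros Hv. pose proof (dist_set_complement_pos V (f x) HV Hv) as Hpos.
      fold (depth (f x)) in Hpos.
      destruct (inv_succ_lt (depth (f x) / 2)) as [m Hm]; [lra|].
      destruct (pointwise_limit_ball fn f Hlim x (depth (f x) / 2)) as [k Hk]; [lra|].
      exists (Cantor.to_nat (m, k)). unfold piece. rewrite Cantor.cancel_of_to. cbn [fst snd].
      intros n Hn. apply inv_succ_le_iff. specialize (Hk n Hn).
      pose proof (dist_set_lipschitz (f x) (fn n x) (fun a => ~ V a)) as Hlip.
      pose proof (Rle_abs (depth (f x) - depth (fn n x))). unfold depth in *. lra.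
    + intros [N HN]. apply NNPP. intros Hnv. unfold piece in HN.
      set (m := fst (Cantor.of_nat N)) in HN. set (k := snd (Cantor.of_nat N)) in HN.
      destruct (pointwise_limit_ball fn f Hlim x (inv_succ m)) as [N0 HN0];
        [apply inv_succ_pos|].
      specialize (HN (Nat.max k N0) ltac:(lia)). specialize (HN0 (Nat.max k N0) ltac:(lia)).
      apply inv_succ_le_iff in HN.
      pose proof (dist_set_le (fn (Nat.max k N0) x) (fun a => ~ V a) (f x) Hnv).
      rewrite d_sym in H. unfold depth in HN. lra.
Qed.

Lemma SigmaF0star_of_K1_SigmaF {X} (TX : Topology X) (f : X -> Y) :
  K1 TX TY f -> SigmaF TX TY f -> SigmaF0star TX TY f.
Proof.
  intros HK [I [B [Hs Hbase]]].
  destruct (sigma_sfd_witness_exists _ _ Hs) as [c [psi Hw]].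
  pose proof Hw as [Hpsi [_ Hcl]].
  pose (near_image (p : I * nat) y := exists b, B (fst p) b /\ d (f b) y < inv_succ (snd p)).
  assert (Hnear : forall p, is_open TY (near_image p)).
  { intros p. apply d_open_iff. intros y [b [Bb Hb]].
    exists (inv_succ (snd p) - d (f b) y). split; [lra|].
    intros z Hz. exists b. split; [exact Bb|]. pose proof (d_triangle (f b) y z). lra. }
  destruct (choice _ (fun p => HK _ (Hnear p))) as [F HF].
  pose (piece := fun '((i, (m, (k, l))) : I * (nat * (nat * nat))) x =>
                   F (i, m) l x /\ 1 <= INR (S k) * psi i x).
  exists (I * (nat * (nat * nat)))%type, piece. split; [|split].
  - apply (sigma_sfd_refine TX B c psi code3 piece
             (fun '((_, (_, (k, _))) : I * (nat * (nat * nat))) => INR (S k)) Hw code3_inj).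
    + intros [i [m [k l]]]. apply INR_succ_pos.
    + intros [i [m [k l]]] x [_ Hx]. exact Hx.
  - intros V HV x. split.
    + intros Hv. destruct (open_has_ball V (f x) HV Hv) as [e [He Hball]].
      destruct (inv_succ_lt (e / 2)) as [m Hm]; [lra|].
      destruct (proj1 (Hbase _ (d_ball_open (f x) (e / 2)) x)) as [i [Bix Hi]];
        [rewrite d_self; lra|].
      assert (Hfx : near_image (i, m) (f x)).
      { exists x. split; [exact Bix|]. rewrite d_self. apply inv_succ_pos. }
      destruct (proj1 (proj2 (HF (i, m)) x) Hfx) as [l Hl].
      assert (Hpos : 0 < psi i x).
      { pose proof (Hcl i x (subset_closure TX _ _ Bix)). pose proof (proj2 (Hpsi i) x). lra. }
      destruct (inv_succ_scale_ge1 _ Hpos) as [k Hk].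
      exists (i, (m, (k, l))). split; [split; assumption|].
      intros z [Hz _].
      destruct (proj2 (proj2 (HF (i, m)) z) (ex_intro _ l Hz)) as [b [Bb Hbz]].
      apply Hball. pose proof (Hi b Bb). pose proof (d_triangle (f x) (f b) (f z)).
      cbn in *. lra.
    + intros [q [Hq Hsub]]. exact (Hsub x Hq).
  - intros [i [m [k l]]]. apply func_closed_inter; [apply HF|].
    apply func_closed_superlevel; [apply INR_succ_pos | apply Hpsi].
Qed.

(* Stone's construction: a point [p] is attached to the least centre [c], for a
   well-order, of a [1/(m+1)]-ball containing it; the points [1/(n+1)]-close to
   those [p] whose [3/(n+1)]-ball stays in that ball then form, for fixed [m] and
   [n], a [1/(n+1)]-separated family indexed by the centres. *)
Section StoneNetwork.
Variable (Rw : Y -> Y -> Prop)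
  (Rw_antisym : forall x y, Rw x y -> Rw y x -> x = y)
  (Rw_least : forall P : set Y, (exists x, P x) -> exists z, P z /\ forall x, P x -> Rw z x).

Lemma least_center_exists m p :
  exists c, d p c < inv_succ m /\ forall c', d p c' < inv_succ m -> Rw c c'.
Proof. apply Rw_least. exists p. rewrite d_self. apply inv_succ_pos. Qed.

Definition least_center m p : Y :=
  proj1_sig (constructive_indefinite_description _ (least_center_exists m p)).

Lemma least_center_spec m p : d p (least_center m p) < inv_succ m /\
  forall c', d p c' < inv_succ m -> Rw (least_center m p) c'.
Proof. exact (proj2_sig (constructive_indefinite_description _ (least_center_exists m p))). Qed.

Definition stone_piece m n c : set Y := fun y => exists p, least_center m p = c /\
  (forall z, d p z < 3 * inv_succ n -> d c z < inv_succ m) /\ d p y < inv_succ n.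

Lemma stone_piece_separated_ordered m n c1 c2 y1 y2 : c1 <> c2 -> Rw c1 c2 ->
  stone_piece m n c1 y1 -> stone_piece m n c2 y2 -> inv_succ n <= d y1 y2.
Proof.
  intros Hne Hlt [p1 [E1 [Hin1 Hp1]]] [p2 [E2 [Hin2 Hp2]]].
  assert (Hfar2 : inv_succ m <= d p2 c1).
  { apply Rnot_lt_le. intros Hclose. apply Hne, Rw_antisym; [exact Hlt|].
    rewrite <- E2. apply (least_center_spec m p2), Hclose. }
  assert (Hfar : 3 * inv_succ n <= d p1 p2).
  { apply Rnot_lt_le. intros Hclose. specialize (Hin1 p2 Hclose). rewrite d_sym in Hin1. lra. }
  pose proof (d_triangle p1 y1 p2). pose proof (d_triangle y1 y2 p2).
  rewrite (d_sym y2 p2) in H0. lra.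
Qed.

Lemma stone_piece_separated m n c1 c2 y1 y2 : c1 <> c2 ->
  stone_piece m n c1 y1 -> stone_piece m n c2 y2 -> inv_succ n <= d y1 y2.
Proof.
  intros Hne H1 H2.
  destruct (Rw_least (fun c => c = c1 \/ c = c2)) as [z [[-> | ->] Hz]]; [eauto | |].
  - apply (stone_piece_separated_ordered m n c1 c2); auto.
  - rewrite d_sym. apply (stone_piece_separated_ordered m n c2 c1); auto.
Qed.

Lemma stone_piece_cover y rho : 0 < rho -> exists m n c,
  (forall z, d y z < inv_succ n -> stone_piece m n c z) /\
  (forall z, stone_piece m n c z -> d y z < rho).
Proof.
  intros Hrho. destruct (inv_succ_lt (rho / 2)) as [m Hm]; [lra|].
  pose (c := least_center m y). pose proof (proj1 (least_center_spec m y)) as Hc. fold c in Hc.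
  destruct (inv_succ_lt ((inv_succ m - d y c) / 3)) as [n Hn]; [lra|].
  exists m, n, c. split.
  - intros z Hz. exists y. split; [reflexivity|]. split; [|exact Hz].
    intros u Hu. pose proof (d_triangle c y u). rewrite (d_sym c y) in H. lra.
  - intros z [p [E [Hin Hpz]]].
    assert (d c z < inv_succ m) by (apply Hin; pose proof (inv_succ_pos n); lra).
    pose proof (d_triangle y c z). lra.
Qed.

End StoneNetwork.

Lemma sigma_discrete_network : exists D : nat -> nat -> Y -> set Y,
  (forall m n c1 c2 y1 y2, c1 <> c2 -> D m n c1 y1 -> D m n c2 y2 -> inv_succ n <= d y1 y2) /\
  (forall y rho, 0 < rho -> exists m n c,
     (forall z, d y z < inv_succ n -> D m n c z) /\ (forall z, D m n c z -> d y z < rho)).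
Proof.
  destruct (well_order_exists Y) as [Rw [Hanti Hleast]].
  exists (stone_piece Rw Hleast). split.
  - apply stone_piece_separated. exact Hanti.
  - apply stone_piece_cover.
Qed.

Lemma SigmaF_of_Baire1 {X} (TX : Topology X) (f : X -> Y) : Baire1 TX TY f -> SigmaF TX TY f.
Proof.
  intros [fn [Hfn Hlim]].
  destruct sigma_discrete_network as [D [Hsep Hcover]].
  pose (piece := fun '((c, (m, (n, k))) : Y * (nat * (nat * nat))) x =>
                   forall j, (k <= j)%nat -> D m n c (fn j x)).
  pose (psi := fun '((c, (m, (n, k))) : Y * (nat * (nat * nat))) x =>
                 bump (D m n c) (inv_succ n / 6) (fn k x)).
  assert (Hpsi : forall q, cont01 TX (psi q)).
  { intros [c [m [n k]]]. pose proof (inv_succ_pos n).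
    destruct (bump_cont01 (D m n c) (inv_succ n / 6)) as [Hb Hb01]; [lra|].
    split; [apply (continuous_R_comp TX TY); [apply Hfn | exact Hb] | intros x; apply Hb01]. }
  exists (Y * (nat * (nat * nat)))%type, piece. split.
  - apply (sigma_sfd_of_levels TX piece code3 psi code3_inj Hpsi).
    + intros [m [n k]] x. pose proof (inv_succ_pos n).
      exists (fun z => d (fn k x) (fn k z) < inv_succ n / 6). split; [|split].
      * apply (Hfn k (fun y => d (fn k x) y < inv_succ n / 6)), d_ball_open.
      * rewrite d_self. lra.
      * intros c1 c2 [y1 [W1 H1]] [y2 [W2 H2]].
        apply (bump_supports_discrete (D m n) (inv_succ n)
                 (conj (inv_succ_pos n) (inv_succ_le1 n)) (Hsep m n) (fn k x) (fn k y1) (fn k y2));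
          assumption.
    + intros q x Hcl Hzero.
      assert (Hlevel : 1 <= psi q x).
      { apply (closure_superlevel TX (piece q)); [apply Hpsi | | exact Hcl].
        destruct q as [c [m [n k]]]. intros z Hz. cbn. rewrite bump_one; [lra|].
        apply Hz. lia. }
      lra.
  - intros V HV x. split.
    + intros Hv. destruct (open_has_ball V (f x) HV Hv) as [e [He Hball]].
      destruct (Hcover (f x) (e / 2)) as [m [n [c [Hin Hout]]]]; [lra|].
      destruct (pointwise_limit_ball fn f Hlim x (inv_succ n)) as [k Hk];
        [apply inv_succ_pos|].
      exists (c, (m, (n, k))). split.
      * intros j Hj. apply Hin, Hk, Hj.
      * intros z Hz. apply Hball. enough (d (f x) (f z) <= e / 2) by lra.
        apply (pointwise_limit_le fn f (f x) (e / 2) k z Hlim).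
        intros j Hj. apply Hout, Hz, Hj.
    + intros [q [Hq Hsub]]. exact (Hsub x Hq).
Qed.

End MetricSpace.

Theorem mainTheorem1 (X Y : Type) (TX : Topology X) (TY : Topology Y)
  (HY : metrizable TY) :
  (forall f : X -> Y, Baire1 TX TY f -> SigmaF0star TX TY f) /\
  (forall f : X -> Y, SigmaF0star TX TY f <-> (K1 TX TY f /\ SigmaF TX TY f)).
Proof.
  destruct HY as [d [Hd0 [Hsym [Htri Hopen]]]].
  split.
  - intros f Hf. apply (SigmaF0star_of_K1_SigmaF TY d Hd0 Htri Hopen).
    + exact (K1_of_Baire1 TY d Hd0 Hsym Htri Hopen TX f Hf).
    + exact (SigmaF_of_Baire1 TY d Hd0 Hsym Htri Hopen TX f Hf).
  - intros f. split.
    + intros Hf. split; [exact (K1_of_SigmaF0star TX TY f Hf)|].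
      destruct Hf as [I [B [Hs [Hbase _]]]]. exists I, B. auto.
    + intros [HK HS]. exact (SigmaF0star_of_K1_SigmaF TY d Hd0 Htri Hopen TX f HK HS).
Qed.
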